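(* Let $(a_n)_{n\in\mathbb{N}}$ be a sequence of real numbers with $a_1>a_2>\cdots>a_n>a_{n+1}>\cdots\ge 0$, and let $\alpha\ge0$ be its limit. Consider the statements: (i) $\alpha=0$; (ii) for every integer $k\ge0$ and every $\varepsilon>0$ there exists $\delta>0$ such that for all $n\in\mathbb{N}$, $a_n<\varepsilon+\delta$ implies $a_{n+k}\le\varepsilon$; (iii) for every integer $k\ge1$ and every $\varepsilon>0$ there exists $\delta>0$ such that for all $n\in\mathbb{N}$, $\frac{1}{2}(a_n+a_{n+1})<\varepsilon+\delta$ implies $a_{n+k}\le\varepsilon$; (iv) for every $\varepsilon\in(0,\infty)\setminus\{a_k : k\in\mathbb{N}\}$ there exists $\delta>0$ such that for all $m,n\in\mathbb{N}$, $a_m+a_n<\varepsilon+\delta$ implies $a_m+a_n\le\varepsilon$; (v) for every $\varepsilon>0$ there exists $\delta>0$ such that for all $m,n\in\mathbb{N}$, $a_m+a_n<\varepsilon+\delta$ implies $a_m+a_n\le\varepsilon$. Then (i), (ii), (iii), (iv) are equivalent; moreover (v) implies (i), but (i) does not imply (v).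
   Context: $\mathbb{N}=\{1,2,3,\dots\}$. *)

(* concrete reals R. Sequences a : nat -> R; only indices n >= 1
   are used, matching N = {1,2,3,...}; the value a 0 is irrelevant. *)
From Stdlib Require Export Reals.
Open Scope R_scope.

Definition strict_dec_nonneg (a : nat -> R) : Prop :=
  (forall n : nat, (1 <= n)%nat -> a (S n) < a n) /\
  (forall n : nat, (1 <= n)%nat -> 0 <= a n).

Definition is_limit (a : nat -> R) (alpha : R) : Prop :=
  forall eps : R, eps > 0 -> exists N : nat, forall n : nat,
    (N <= n)%nat -> (1 <= n)%nat -> Rabs (a n - alpha) < eps.

Definition cond_i (alpha : R) : Prop := alpha = 0.

Definition cond_ii (a : nat -> R) : Prop :=
  forall (k : nat) (eps : R), eps > 0 -> exists delta : R, delta > 0 /\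
    forall n : nat, (1 <= n)%nat -> a n < eps + delta -> a (n + k)%nat <= eps.

Definition cond_iii (a : nat -> R) : Prop :=
  forall (k : nat) (eps : R), (1 <= k)%nat -> eps > 0 -> exists delta : R, delta > 0 /\
    forall n : nat, (1 <= n)%nat -> (a n + a (S n)) / 2 < eps + delta ->
      a (n + k)%nat <= eps.

Definition cond_iv (a : nat -> R) : Prop :=
  forall eps : R, eps > 0 -> (forall k : nat, (1 <= k)%nat -> eps <> a k) ->
    exists delta : R, delta > 0 /\
    forall m n : nat, (1 <= m)%nat -> (1 <= n)%nat ->
      a m + a n < eps + delta -> a m + a n <= eps.

Definition cond_v (a : nat -> R) : Prop :=
  forall eps : R, eps > 0 ->
    exists delta : R, delta > 0 /\
    forall m n : nat, (1 <= m)%nat -> (1 <= n)%nat ->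
      a m + a n < eps + delta -> a m + a n <= eps.

(* If alpha = 0, only finitely many terms exceed a given eps > 0, and a finite set
   of reals has a gap just above eps; this gives (ii) and (iii). For (iv) the same
   holds for the sums a_m + a_n: if one index is large, its term is tiny, so the
   other term would lie just below or above eps, and when eps is not a term the
   terms avoid a neighbourhood of eps. Conversely, if alpha > 0 the terms (resp.
   the sums a_j + a_n, for a suitable j) decrease strictly to alpha (resp. to a
   non-term alpha + a_j), which violates every gap condition. The harmonic
   sequence shows that (v) is stronger than (i): at eps = a_1 there is no gap. *)
From Stdlib Require Import Reals Lra Lia Arith List.
Open Scope R_scope.

Lemma finite_gap_above (l : list R) (eps : R) :
  exists delta, 0 < delta /\ forall x, In x l -> x < eps + delta -> x <= eps.
Proof.
  induction l as [|y l [delta [Hdelta Hgap]]].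
  - exists 1; split; [lra | intros x []].
  - destruct (Rle_dec y eps) as [Hy|Hy].
    + exists delta; split; [exact Hdelta|].
      intros x [<-|Hx]; [intros _; exact Hy | exact (Hgap x Hx)].
    + exists (Rmin delta (y - eps)); split; [apply Rmin_glb_lt; lra|].
      pose proof (Rmin_l delta (y - eps)); pose proof (Rmin_r delta (y - eps)).
      intros x [<-|Hx] Hlt; [lra | apply Hgap; [exact Hx | lra]].
Qed.

Lemma prefix_gap_above (f : nat -> R) (N : nat) (eps : R) :
  exists delta, 0 < delta /\
    forall k, (k < N)%nat -> f k < eps + delta -> f k <= eps.
Proof.
  destruct (finite_gap_above (map f (seq 0 N)) eps) as [delta [Hdelta Hgap]].
  exists delta; split; [exact Hdelta|].
  intros k Hk; apply Hgap, in_map, in_seq; lia.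
Qed.

Lemma square_gap_above (g : nat -> nat -> R) (N : nat) (eps : R) :
  exists delta, 0 < delta /\ forall m n, (m < N)%nat -> (n < N)%nat ->
    g m n < eps + delta -> g m n <= eps.
Proof.
  destruct (finite_gap_above
              (flat_map (fun m => map (g m) (seq 0 N)) (seq 0 N)) eps)
    as [delta [Hdelta Hgap]].
  exists delta; split; [exact Hdelta|].
  intros m n Hm Hn; apply Hgap, in_flat_map.
  exists m; split; [apply in_seq; lia | apply in_map, in_seq; lia].
Qed.

Section DecreasingLimit.

Variables (a : nat -> R) (alpha : R).
Hypotheses (Hdec : strict_dec_nonneg a) (Hlim : is_limit a alpha).

Lemma strict_dec_le i j : (1 <= i)%nat -> (i <= j)%nat -> a j <= a i.
Proof.
  intros Hi Hij; induction Hij as [|j Hij IH]; [lra|].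
  pose proof (proj1 Hdec j ltac:(lia)); lra.
Qed.

Lemma limit_eventually_lt t : alpha < t ->
  exists N, forall k, (N <= k)%nat -> (1 <= k)%nat -> a k < t.
Proof.
  intros Ht; destruct (Hlim (t - alpha) ltac:(lra)) as [N HN].
  exists N; intros k Hk Hk1.
  destruct (Rabs_def2 _ _ (HN k Hk Hk1)); lra.
Qed.

Lemma limit_approx d : 0 < d -> exists n, (1 <= n)%nat /\ a n < alpha + d.
Proof.
  intros Hd; destruct (limit_eventually_lt (alpha + d) ltac:(lra)) as [N HN].
  exists (Nat.max N 1); split; [lia | apply HN; lia].
Qed.

Lemma limit_le j : (1 <= j)%nat -> alpha <= a j.
Proof.
  intros Hj; apply Rnot_lt_le; intros Hlt.
  destruct (Hlim (alpha - a j) ltac:(lra)) as [N HN].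
  pose proof (strict_dec_le j (Nat.max N j) Hj ltac:(lia)).
  destruct (Rabs_def2 _ _ (HN (Nat.max N j) ltac:(lia) ltac:(lia))); lra.
Qed.

Lemma limit_lt j : (1 <= j)%nat -> alpha < a j.
Proof.
  intros Hj; pose proof (limit_le (S j) ltac:(lia)).
  pose proof (proj1 Hdec j Hj); lra.
Qed.

Lemma limit_zero_or_pos : alpha = 0 \/ 0 < alpha.
Proof.
  destruct (Rtotal_order alpha 0) as [Hneg|[H0|Hpos]]; [|left|right]; auto.
  destruct (limit_eventually_lt 0 Hneg) as [N HN].
  pose proof (proj2 Hdec (Nat.max N 1) ltac:(lia)).
  pose proof (HN (Nat.max N 1) ltac:(lia) ltac:(lia)); lra.
Qed.

Lemma limit_gap_above eps : alpha < eps ->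
  exists delta, 0 < delta /\
    forall n, (1 <= n)%nat -> a n < eps + delta -> a n <= eps.
Proof.
  intros Heps; destruct (limit_eventually_lt eps Heps) as [N HN].
  destruct (prefix_gap_above a N eps) as [delta [Hdelta Hgap]].
  exists delta; split; [exact Hdelta|]; intros n Hn Hlt.
  destruct (le_lt_dec N n) as [HNn|HnN].
  - left; exact (HN n HNn Hn).
  - exact (Hgap n HnN Hlt).
Qed.

Lemma limit_value_gap eps : alpha < eps ->
  (forall k, (1 <= k)%nat -> eps <> a k) ->
  exists h, 0 < h /\ forall k, (1 <= k)%nat -> eps - h < a k -> eps + h <= a k.
Proof.
  intros Heps Hne; set (t := (alpha + eps) / 2).
  destruct (limit_eventually_lt t ltac:(unfold t; lra)) as [N HN].
  destruct (prefix_gap_above a N eps) as [d1 [Hd1 Hgap1]].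
  destruct (prefix_gap_above (fun k => - a k) N (- eps)) as [d2 [Hd2 Hgap2]].
  set (h := Rmin (eps - t) (Rmin d1 d2)).
  assert (Hht : h <= eps - t) by apply Rmin_l.
  assert (Hh1 : h <= d1) by (eapply Rle_trans; [apply Rmin_r | apply Rmin_l]).
  assert (Hh2 : h <= d2) by (eapply Rle_trans; [apply Rmin_r | apply Rmin_r]).
  exists h; split; [unfold h, t; repeat apply Rmin_glb_lt; lra|].
  intros k Hk Hlow; apply Rnot_lt_le; intros Hup.
  destruct (le_lt_dec N k) as [HNk|HkN].
  - pose proof (HN k HNk Hk); lra.
  - pose proof (Hgap1 k HkN ltac:(lra)); pose proof (Hgap2 k HkN ltac:(lra)).
    apply (Hne k Hk); lra.
Qed.

Lemma cond_i_cond_ii : cond_i alpha -> cond_ii a.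
Proof.
  intros H0 k eps Heps.
  destruct (limit_gap_above eps ltac:(unfold cond_i in H0; lra))
    as [delta [Hdelta Hgap]].
  exists delta; split; [exact Hdelta|]; intros n Hn Hlt.
  pose proof (strict_dec_le n (n + k) Hn ltac:(lia)).
  pose proof (Hgap n Hn Hlt); lra.
Qed.

Lemma cond_ii_cond_i : cond_ii a -> cond_i alpha.
Proof.
  intros Hii; destruct limit_zero_or_pos as [|Hpos]; [assumption|exfalso].
  destruct (Hii 0%nat alpha Hpos) as [delta [Hdelta Hgap]].
  destruct (limit_approx delta Hdelta) as [n [Hn Hlt]].
  pose proof (Hgap n Hn Hlt) as Hle; rewrite Nat.add_0_r in Hle.
  pose proof (limit_lt n Hn); lra.
Qed.

Lemma cond_i_cond_iii : cond_i alpha -> cond_iii a.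
Proof.
  intros H0 k eps Hk Heps.
  destruct (cond_i_cond_ii H0 (k - 1)%nat eps Heps) as [delta [Hdelta Hgap]].
  exists delta; split; [exact Hdelta|]; intros n Hn Hmean.
  pose proof (proj1 Hdec n Hn).
  replace (n + k)%nat with (S n + (k - 1))%nat by lia.
  apply Hgap; [lia | lra].
Qed.

Lemma cond_iii_cond_i : cond_iii a -> cond_i alpha.
Proof.
  intros Hiii; destruct limit_zero_or_pos as [|Hpos]; [assumption|exfalso].
  destruct (Hiii 1%nat alpha (le_n 1) Hpos) as [delta [Hdelta Hgap]].
  destruct (limit_approx delta Hdelta) as [n [Hn Hlt]].
  pose proof (proj1 Hdec n Hn); pose proof (limit_lt (n + 1) ltac:(lia)).
  pose proof (Hgap n Hn ltac:(lra)); lra.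
Qed.

Lemma cond_i_cond_iv : cond_i alpha -> cond_iv a.
Proof.
  intros H0 eps Heps Hne; unfold cond_i in H0.
  destruct (limit_value_gap eps ltac:(lra) Hne) as [h [Hh Hsep]].
  destruct (limit_eventually_lt h ltac:(lra)) as [N HN].
  destruct (square_gap_above (fun m n => a m + a n) N eps) as [d [Hd Hgap]].
  assert (Hlarge : forall m n, (1 <= m)%nat -> (1 <= n)%nat -> (N <= n)%nat ->
            eps < a m + a n -> eps + h <= a m + a n).
  { intros m n Hm Hn HNn Hgt.
    pose proof (HN n HNn Hn); pose proof (proj2 Hdec n Hn).
    pose proof (Hsep m Hm ltac:(lra)); lra. }
  exists (Rmin h d); split; [apply Rmin_glb_lt; assumption|].
  pose proof (Rmin_l h d); pose proof (Rmin_r h d).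
  intros m n Hm Hn Hlt; apply Rnot_lt_le; intros Hgt.
  destruct (le_lt_dec N n) as [HNn|HnN].
  - pose proof (Hlarge m n Hm Hn HNn Hgt); lra.
  - destruct (le_lt_dec N m) as [HNm|HmN].
    + rewrite Rplus_comm in Hgt; pose proof (Hlarge n m Hn Hm HNm Hgt); lra.
    + pose proof (Hgap m n HmN HnN ltac:(lra)); lra.
Qed.

Lemma cond_iv_cond_i : cond_iv a -> cond_i alpha.
Proof.
  intros Hiv; destruct limit_zero_or_pos as [|Hpos]; [assumption|exfalso].
  (* eps := alpha + a_j is not a term, yet the sums a_j + a_n decrease to it
     strictly from above. *)
  destruct (limit_gap_above (2 * alpha) ltac:(lra)) as [eta [Heta Hgap]].
  destruct (limit_approx eta Heta) as [j [Hj Haj]].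
  pose proof (limit_lt j Hj).
  destruct (Hiv (alpha + a j) ltac:(lra)) as [delta [Hdelta Hsum]].
  { intros k Hk Heq; pose proof (Hgap k Hk ltac:(lra)); lra. }
  destruct (limit_approx delta Hdelta) as [n [Hn Han]].
  pose proof (limit_lt n Hn); pose proof (Hsum j n Hj Hn ltac:(lra)); lra.
Qed.

End DecreasingLimit.

Lemma cond_v_cond_iv (a : nat -> R) : cond_v a -> cond_iv a.
Proof. intros Hv eps Heps _; exact (Hv eps Heps). Qed.

Definition harmonic (n : nat) : R := / INR n.

Lemma harmonic_strict_dec_nonneg : strict_dec_nonneg harmonic.
Proof.
  unfold harmonic; split; intros n Hn.
  - apply Rinv_lt_contravar; rewrite ?S_INR.
    + pose proof (lt_0_INR n ltac:(lia)); nra.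
    + lra.
  - left; apply Rinv_0_lt_compat, lt_0_INR; lia.
Qed.

Lemma harmonic_limit : is_limit harmonic 0.
Proof.
  intros eps Heps; destruct (archimed_cor1 eps Heps) as [N [HN HN0]].
  exists N; intros n HNn Hn; unfold harmonic; rewrite Rminus_0_r.
  pose proof (lt_0_INR n ltac:(lia)); pose proof (lt_0_INR N HN0).
  rewrite Rabs_right by (left; apply Rinv_0_lt_compat; assumption).
  apply Rle_lt_trans with (/ INR N); [|exact HN].
  apply Rinv_le_contravar; [assumption | apply le_INR, HNn].
Qed.

(* (v) fails at eps = a_1: the sums a_1 + a_n approach it from above. *)
Lemma harmonic_not_cond_v : ~ cond_v harmonic.
Proof.
  intros Hv; destruct (Hv 1 Rlt_0_1) as [delta [Hdelta Hgap]].
  destruct (archimed_cor1 delta Hdelta) as [N [HN HN0]].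
  pose proof (Hgap 1%nat N (le_n 1) HN0) as Hle; unfold harmonic in *.
  rewrite INR_1, Rinv_1 in Hle.
  pose proof (Rinv_0_lt_compat _ (lt_0_INR N HN0)).
  pose proof (Hle ltac:(lra)); lra.
Qed.

Theorem lemma5p1 :
  (forall (a : nat -> R) (alpha : R),
     strict_dec_nonneg a -> is_limit a alpha ->
     (cond_i alpha <-> cond_ii a) /\
     (cond_i alpha <-> cond_iii a) /\
     (cond_i alpha <-> cond_iv a) /\
     (cond_v a -> cond_i alpha)) /\
  (exists (a : nat -> R) (alpha : R),
     strict_dec_nonneg a /\ is_limit a alpha /\ cond_i alpha /\ ~ cond_v a).
Proof.
  split.
  - intros a alpha Hdec Hlim.
    split; [split; [apply cond_i_cond_ii | apply cond_ii_cond_i]; assumption|].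
    split; [split; [apply cond_i_cond_iii | apply cond_iii_cond_i]; assumption|].
    split; [split; [apply cond_i_cond_iv | apply cond_iv_cond_i]; assumption|].
    intros Hv; apply (cond_iv_cond_i a alpha); [assumption | assumption |].
    apply cond_v_cond_iv, Hv.
  - exists harmonic, 0.
    repeat split;
      [apply harmonic_strict_dec_nonneg | apply harmonic_strict_dec_nonneg
      | apply harmonic_limit | apply harmonic_not_cond_v].
Qed.
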